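(* Suppose $\Gamma$ satisfies (1) the Moser–Harnack inequality with constant $C_H$ and (2) the exit time upper bound with constant $c$. Let $x\in\mathbb V$, $r\ge1$, and let $f:\mathbb V\to[0,\infty)$ satisfy $-\Delta f(y)\le1$ for all $y\in B(x,2r)$. Then there is a constant $c_2$ depending only on $C_H$ and $c$ such that $$\sum_{y\in B(x,2r)}f(y)^2\ge(2C_H)^{-1}|B(x,2r)|\Big(\sup_{y\in B(x,r)}f(y)^2-c_2r^4\Big).$$
   Context: $\Gamma=(\mathbb V,\mathcal E)$ is a connected simple unweighted graph with bounded degrees, $\deg(x)=\#\{y:y\sim x\}$, $d_0$ the shortest-path metric, $B(x,r)=\{y:d_0(x,y)\le r\}$. The Laplacian is $\Delta f(x)=\sum_{y\sim x}(f(y)-f(x))$. For a finite set $B$, the Dirichlet Laplacian $-\Delta^B$ is the matrix on $\ell^2(B)$ with entries $(-\Delta^B)(x,y)=\deg(x)\delta_{xy}-\mathbf 1_{x\sim y}$, $x,y\in B$ (equivalently $\Delta$ applied to functions extended by zero outside $B$). Moser–Harnack inequality: for all $x\in\mathbb V$, $r>0$ and every $g\ge0$ with $-\Delta g\le0$ on $B(x,2r)$, $\sup_{y\in B(x,r)}g(y)^2\le\frac{C_H}{|B(x,2r)|}\sum_{y\in B(x,2r)}g(y)^2$. Exit time upper bound: for all $x\in\mathbb V$, $r\ge1$ and $B=B(x,r)$, $(-\Delta^B)^{-1}\mathbf 1_B(x)\le cr^2$. *)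

From HB Require Import structures.
From mathcomp Require Import all_boot all_order all_algebra.
From mathcomp Require Import reals.
Set Implicit Arguments. Unset Strict Implicit. Unset Printing Implicit Defensive.
Import Order.TTheory GRing.Theory Num.Theory.
Local Open Scope ring_scope.

(* A graph on a vertex type V (possibly infinite) is given by its
   neighbourhood lists: y ~ x  iff  y \in nbrs x. *)

Definition simple_graph (V : eqType) (nbrs : V -> seq V) : Prop :=
  (forall x, uniq (nbrs x)) /\ (forall x, x \notin nbrs x) /\
  (forall x y, (y \in nbrs x) = (x \in nbrs y)).

Definition bounded_degree (V : eqType) (nbrs : V -> seq V) : Prop :=
  exists D : nat, forall x, (size (nbrs x) <= D)%N.

Definition deg (V : eqType) (nbrs : V -> seq V) (x : V) : nat := size (nbrs x).

(* Breadth-first enumeration of {y : d0(x,y) <= n} (without repetitions). *)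
Fixpoint ballseq (V : eqType) (nbrs : V -> seq V) (x : V) (n : nat) : seq V :=
  match n with
  | 0 => [:: x]
  | n'.+1 => let s := ballseq nbrs x n' in
             undup (s ++ flatten [seq nbrs y | y <- s])
  end.

Definition connected_graph (V : eqType) (nbrs : V -> seq V) : Prop :=
  forall x y : V, exists n : nat, y \in ballseq nbrs x n.

Definition ball (R : realType) (V : eqType) (nbrs : V -> seq V) (x : V) (r : R)
  : seq V := ballseq nbrs x `|Num.floor r|%N.

Definition Lap (R : realType) (V : eqType) (nbrs : V -> seq V) (f : V -> R)
  (x : V) : R := \sum_(y <- nbrs x) (f y - f x).

(* sup over a finite nonempty list of a nonnegative quantity *)
Definition supl (R : realType) (V : eqType) (s : seq V) (F : V -> R) : R :=
  \big[Num.max/0]_(y <- s) F y.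

(* Dirichlet Laplacian -Delta^B as a matrix on l^2(B), with B enumerated by
   the duplicate-free list s (d is an irrelevant default vertex). *)
Definition dirLap (R : realType) (V : eqType) (nbrs : V -> seq V) (d : V)
  (s : seq V) : 'M[R]_(size s) :=
  \matrix_(i, j) ((deg nbrs (nth d s i))%:R * (i == j)%:R
                  - (nth d s j \in nbrs (nth d s i))%:R).

Definition moser_harnack (R : realType) (V : eqType) (nbrs : V -> seq V)
  (CH : R) : Prop :=
  forall (x : V) (r : R), 0 < r ->
  forall g : V -> R, (forall y, 0 <= g y) ->
    (forall y, y \in ball nbrs x (2 * r) -> - Lap nbrs g y <= 0) ->
    supl (ball nbrs x r) (fun y => g y ^+ 2)
      <= CH / (size (ball nbrs x (2 * r)))%:R
         * \sum_(y <- ball nbrs x (2 * r)) g y ^+ 2.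

(* Exit time upper bound with constant c:  (-Delta^B)^{-1} 1_B (x) <= c r^2,
   B = B(x,r), r >= 1 (including that -Delta^B is invertible). *)
Definition exit_time_bound (R : realType) (V : eqType) (nbrs : V -> seq V)
  (c : R) : Prop :=
  forall (x : V) (r : R), 1 <= r ->
    let s := ball nbrs x r in
    dirLap R nbrs x s \in unitmx /\
    forall i : 'I_(size s), nth x s i = x ->
      (invmx (dirLap R nbrs x s) *m (const_mx 1 : 'cV[R]_(size s))) i 0 <= c * r ^+ 2.

(* For y0 in B(x,r) let u be the exit-time function of B(y0,3r), extended by
   zero: u >= 0, Delta u = -1 on B(y0,3r) (which contains B(x,2r)) and
   u(y0) <= 9 c r^2.  Then g = max(f - u, 0) is subharmonic on B(x,2r), so the
   Moser-Harnack inequality bounds g(y0)^2 by CH/|B(x,2r)| sum g^2, and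
   g <= f there.  Since f(y0) <= g(y0) + u(y0),
   f(y0)^2 <= 2 g(y0)^2 + 2 u(y0)^2 <= 2 CH/|B(x,2r)| sum f^2 + 162 c^2 r^4. *)
From HB Require Import structures.
From mathcomp Require Import all_boot all_order all_algebra.
From mathcomp Require Import reals.
From mathcomp Require Import zify.
From mathcomp Require Import ring lra.
Import Order.TTheory GRing.Theory Num.Theory.
Local Open Scope ring_scope.

Lemma floor_add_norm {R : realType} {a b : R} : 0 <= a -> 0 <= b ->
  (`|Num.floor a| + `|Num.floor b| <= `|Num.floor (a + b)|)%N.
Proof.
move=> a0 b0.
have fD : Num.floor a + Num.floor b <= Num.floor (a + b).
  by rewrite floor_ge_int intrD lerD // floor_le.
have fa0 : 0 <= Num.floor a by rewrite floor_ge0.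
have fb0 : 0 <= Num.floor b by rewrite floor_ge0.
lia.
Qed.

Lemma sqr_le_addD {R : realFieldType} {a b c : R} : 0 <= a -> a <= b + c ->
  a ^+ 2 <= 2 * b ^+ 2 + 2 * c ^+ 2.
Proof.
move=> a0 abc; have : 0 <= (b - c) ^+ 2 by apply: sqr_ge0.
have : a * a <= (b + c) * (b + c) by apply: ler_pM.
rewrite !expr2; nra.
Qed.

Section Balls.
Variables (V : eqType) (nbrs : V -> seq V).

Lemma mem_ballseqS x n y : (y \in ballseq nbrs x n.+1) =
  (y \in ballseq nbrs x n) || has (fun z => y \in nbrs z) (ballseq nbrs x n).
Proof.
rewrite /= mem_undup mem_cat; congr (_ || _).
apply/flattenP/hasP => [[t /mapP [z zin ->] yt]|[z zin yz]]; first by exists z.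
by exists (nbrs z) => //; apply/mapP; exists z.
Qed.

Lemma ballseq_center x n : x \in ballseq nbrs x n.
Proof. by elim: n => [|n IH]; rewrite ?inE // mem_ballseqS IH. Qed.

Lemma sub_ballseq {x m n} : (m <= n)%N ->
  {subset ballseq nbrs x m <= ballseq nbrs x n}.
Proof.
move=> /subnK <-; elim: (n - m)%N => [//|k IH] y /IH yin.
by rewrite addSn mem_ballseqS yin.
Qed.

Lemma ballseq_uniq x n : uniq (ballseq nbrs x n).
Proof. by case: n => [|n] //=; rewrite undup_uniq. Qed.

Lemma ballseq_trans {x w z a b} : w \in ballseq nbrs x a ->
  z \in ballseq nbrs w b -> z \in ballseq nbrs x (a + b).
Proof.
move=> wx; elim: b z => [|b IH] z; first by rewrite inE => /eqP ->; rewrite addn0.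
rewrite mem_ballseqS addnS => /orP [/IH zx|/hasP [t /IH tx zt]].
  exact: sub_ballseq (leqnSn _) _ zx.
by rewrite mem_ballseqS; apply/orP; right; apply/hasP; exists t.
Qed.

Lemma ballseq_sym {x y n} : simple_graph nbrs ->
  y \in ballseq nbrs x n -> x \in ballseq nbrs y n.
Proof.
case=> _ [_ nbrs_sym]; elim: n x y => [|n IH] x y; first by rewrite !inE => /eqP ->.
rewrite mem_ballseqS => /orP [/IH xy|/hasP [t tx yt]].
  exact: sub_ballseq (leqnSn n) _ xy.
have ty : t \in ballseq nbrs y 1 by rewrite mem_ballseqS /= -nbrs_sym yt orbT.
by rewrite -add1n; apply: ballseq_trans ty (IH _ _ tx).
Qed.

Lemma sub_ball_addr (R : realType) x y (a b : R) : simple_graph nbrs ->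
  0 <= a -> 0 <= b -> y \in ball nbrs x a ->
  {subset ball nbrs x b <= ball nbrs y (a + b)}.
Proof.
move=> sg a0 b0 yx z zx; apply: sub_ballseq (floor_add_norm a0 b0) _ _.
exact: ballseq_trans (ballseq_sym sg yx) zx.
Qed.

End Balls.

Arguments ballseq_center {V nbrs} x n.

Section LaplacianCalculus.
Variables (R : realType) (V : eqType) (nbrs : V -> seq V).

Lemma Lap_const (a : R) y : Lap nbrs (fun=> a) y = 0.
Proof. by rewrite /Lap big1 // => z _; rewrite subrr. Qed.

Lemma LapB (f g : V -> R) y :
  Lap nbrs (fun z => f z - g z) y = Lap nbrs f y - Lap nbrs g y.
Proof. by rewrite /Lap -sumrB; apply: eq_bigr => z _; rewrite opprD !addrA; lra. Qed.

Lemma Lap_max0_ge0 (g : V -> R) y : 0 <= Lap nbrs g y ->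
  0 <= Lap nbrs (fun z => Num.max (g z) 0) y.
Proof.
rewrite /Lap; case: (leP 0 (g y)) => [gy0 Lg0|gy0 _].
  by apply: le_trans Lg0 _; apply: ler_sum => z _; rewrite lerD2r le_max lexx.
by apply: sumr_ge0 => z _; rewrite subr0 le_max lexx orbT.
Qed.

End LaplacianCalculus.

Lemma supl_ub {R : realType} {V : eqType} {s : seq V} {F : V -> R} {y : V} :
  y \in s -> F y <= supl s F.
Proof.
rewrite /supl; elim: s => [//|a s IH]; rewrite inE big_cons => /orP [/eqP ->|/IH h].
  by rewrite le_max lexx.
by rewrite le_max h orbT.
Qed.

Lemma supl_le {R : realType} {V : eqType} (s : seq V) (F : V -> R) B :
  0 <= B -> (forall y, y \in s -> F y <= B) -> supl s F <= B.
Proof.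
move=> B0; rewrite /supl; elim: s => [|a s IH] FB; first by rewrite big_nil.
rewrite big_cons ge_max FB ?mem_head //=.
by apply: IH => y ys; apply: FB; rewrite inE ys orbT.
Qed.

Lemma sumr_delta {R : pzSemiRingType} {n} (i : 'I_n) (F : 'I_n -> R) :
  \sum_j (i == j)%:R * F j = F i.
Proof.
rewrite (bigD1 i) //= eqxx mul1r big1 ?addr0 // => j ji.
by rewrite eq_sym (negbTE ji) mul0r.
Qed.

Lemma nth_ordP {T : eqType} (d : T) {s : seq T} {z : T} :
  z \in s -> exists i : 'I_(size s), nth d s i = z.
Proof. by move=> zs; exists (Ordinal (etrans (index_mem z s) zs)); apply: nth_index. Qed.

Section DirichletProblem.
Variables (R : realType) (V : eqType) (nbrs : V -> seq V) (d : V) (s : seq V).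
Hypothesis s_uniq : uniq s.
Hypothesis nbrs_uniq : forall x, uniq (nbrs x).
Variable v : 'cV[R]_(size s).

Definition zero_ext (z : V) : R := \sum_(i < size s) (nth d s i == z)%:R * v i 0.

Lemma zero_ext_notin z : z \notin s -> zero_ext z = 0.
Proof.
move=> zs; rewrite /zero_ext big1 // => i _.
by case: eqP => [iz|_]; [move: zs; rewrite -iz mem_nth | rewrite mul0r].
Qed.

Lemma zero_ext_nth (i : 'I_(size s)) : zero_ext (nth d s i) = v i 0.
Proof.
rewrite /zero_ext (bigD1 i) //= eqxx mul1r big1 ?addr0 // => j ji.
by rewrite nth_uniq // (inj_eq val_inj) (negbTE ji) mul0r.
Qed.

Lemma sum_zero_ext_nbrs y : \sum_(z <- nbrs y) zero_ext z =
  \sum_(j < size s) (nth d s j \in nbrs y)%:R * v j 0.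
Proof.
rewrite /zero_ext exchange_big /=; apply: eq_bigr => j _.
rewrite -big_distrl /= -count_uniq_mem // -sum1_count natr_sum.
by congr (_ * _); rewrite [RHS]big_mkcond; apply: eq_bigr => z _; rewrite /= eq_sym; case: eqP.
Qed.

Lemma Lap_zero_ext (i : 'I_(size s)) :
  Lap nbrs zero_ext (nth d s i) = - (dirLap R nbrs d s *m v) i 0.
Proof.
rewrite mxE /Lap sumrB sum_zero_ext_nbrs zero_ext_nth big_const_seq count_predT iter_addr_0 /deg.
under [in RHS]eq_bigr do rewrite mxE mulrBl -mulrA.
by rewrite sumrB -big_distrr /= sumr_delta opprB mulr_natl.
Qed.

(* Minimum principle: at a minimum of v the Laplacian of the extension is >= 0. *)
Lemma zero_ext_ge0 : (forall i, 0 < (dirLap R nbrs d s *m v) i 0) ->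
  forall z, 0 <= zero_ext z.
Proof.
move=> Mv_gt0 z; case: (boolP (z \in s)) => [/(nth_ordP d) [i0 <-]|/zero_ext_notin -> //].
case: (@arg_minP _ _ _ i0 xpredT (fun i => v i 0)) => // m _ vm_min.
rewrite zero_ext_nth; apply: le_trans (vm_min i0 isT).
rewrite leNgt; apply/negP => vm_lt0.
have : 0 <= Lap nbrs zero_ext (nth d s m).
  apply: sumr_ge0 => t _; rewrite zero_ext_nth subr_ge0.
  case: (boolP (t \in s)) => [/(nth_ordP d) [j <-]|/zero_ext_notin ->].
    by rewrite zero_ext_nth vm_min.
  exact: ltW.
by rewrite Lap_zero_ext oppr_ge0 leNgt Mv_gt0.
Qed.

End DirichletProblem.

Arguments zero_ext {R V} d {s} v z.

Lemma exit_time_potential {R : realType} {V : eqType} {nbrs : V -> seq V}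
    {c : R} (y : V) (r : R) :
  simple_graph nbrs -> exit_time_bound nbrs c -> 1 <= r ->
  exists u : V -> R, [/\ forall z, 0 <= u z,
    forall z, z \in ball nbrs y r -> Lap nbrs u z = -1 & u y <= c * r ^+ 2].
Proof.
move=> [nbrs_uniq _] et r1; have [M_unit vy_le] := et y r r1.
set s := ball nbrs y r in M_unit vy_le; set M := dirLap R nbrs y s in M_unit vy_le.
set v := invmx M *m const_mx 1 in vy_le.
have Mv : M *m v = const_mx 1 by rewrite /v mulmxA mulmxV // mul1mx.
have s_uniq : uniq s by apply: ballseq_uniq.
exists (zero_ext y v); split.
- by apply: zero_ext_ge0 => // i; rewrite Mv mxE.
- by move=> z /(nth_ordP y) [i <-]; rewrite Lap_zero_ext // Mv mxE.
- have [i iy] : exists i : 'I_(size s), nth y s i = y.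
    by apply: nth_ordP; apply: ballseq_center.
  by rewrite -[X in zero_ext _ _ X]iy zero_ext_nth //; apply: vy_le.
Qed.

(* Test the inequality on the constant function 1. *)
Lemma moser_harnack_ge1 {R : realType} {V : eqType} {nbrs : V -> seq V}
    {CH : R} (x : V) : moser_harnack nbrs CH -> 1 <= CH.
Proof.
move=> mh; have x2 : x \in ball nbrs x (2 * 1 : R) by apply: ballseq_center.
have := mh x 1 ltr01 (fun=> 1) (fun=> ler01).
rewrite big_const_seq count_predT iter_addr_0 expr1n divfK; last first.
  by rewrite pnatr_eq0 -lt0n; case: (ball nbrs x _) x2.
have one_harmonic y : - Lap nbrs (fun=> 1 : R) y <= 0 by rewrite Lap_const oppr0.
move=> /(_ (fun y _ => one_harmonic y)); apply: le_trans.
by apply: supl_ub; apply: ballseq_center.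
Qed.

Lemma sqr_le_harnack_mean (R : realType) (CH c : R) (V : eqType)
    (nbrs : V -> seq V) (x y : V) (r : R) (f : V -> R) :
  simple_graph nbrs -> moser_harnack nbrs CH -> exit_time_bound nbrs c ->
  1 <= r -> (forall z, 0 <= f z) ->
  (forall z, z \in ball nbrs x (2 * r) -> - Lap nbrs f z <= 1) ->
  y \in ball nbrs x r ->
  f y ^+ 2 <= 2 * (CH / (size (ball nbrs x (2 * r)))%:R *
                   \sum_(z <- ball nbrs x (2 * r)) f z ^+ 2) + 162 * c ^+ 2 * r ^+ 4.
Proof.
move=> sg mh et r1 f0 hf yx.
set B2 := ball nbrs x (2 * r); set N : R := (size B2)%:R.
have r3 : 1 <= 3 * r by lra.
have [u [u0 Lu uy]] := exit_time_potential y _ sg et r3.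
have B2_sub : {subset B2 <= ball nbrs y (3 * r)}.
  rewrite (_ : 3 * r = r + 2 * r); last lra.
  by apply: sub_ball_addr sg _ _ yx; lra.
pose g z := Num.max (f z - u z) 0.
have g0 z : 0 <= g z by rewrite le_max lexx orbT.
have gf z : g z <= f z by rewrite ge_max f0 andbT; have := u0 z; lra.
have g_sub : forall z, z \in B2 -> - Lap nbrs g z <= 0.
  move=> z zB; rewrite oppr_le0; apply: Lap_max0_ge0.
  by rewrite LapB Lu ?B2_sub //; move: (hf z zB); lra.
have gy : g y ^+ 2 <= CH / N * \sum_(z <- B2) g z ^+ 2.
  by apply: le_trans (mh x r _ g g0 g_sub); [exact: supl_ub yx | lra].
have sum_g_le : \sum_(z <- B2) g z ^+ 2 <= \sum_(z <- B2) f z ^+ 2.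
  by apply: ler_sum => z _; rewrite !expr2 ler_pM.
have CHN0 : 0 <= CH / N.
  by rewrite divr_ge0 ?ler0n // (le_trans ler01 (moser_harnack_ge1 x mh)).
have uy2 : u y ^+ 2 <= (c * (3 * r) ^+ 2) ^+ 2 by rewrite !expr2 ler_pM.
have fy : f y <= g y + u y by rewrite -lerBlDr le_max lexx.
have := sqr_le_addD (f0 y) fy; have := ler_wpM2l CHN0 sum_g_le.
have -> : 162 * c ^+ 2 * r ^+ 4 = 2 * (c * (3 * r) ^+ 2) ^+ 2 by ring.
lra.
Qed.

Theorem corollary2p5 (R : realType) (CH c : R) :
  exists c2 : R,
  forall (V : eqType) (nbrs : V -> seq V),
    simple_graph nbrs -> connected_graph nbrs -> bounded_degree nbrs ->
    moser_harnack nbrs CH -> exit_time_bound nbrs c ->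
    forall (x : V) (r : R), 1 <= r ->
    forall f : V -> R, (forall y, 0 <= f y) ->
      (forall y, y \in ball nbrs x (2 * r) -> - Lap nbrs f y <= 1) ->
      \sum_(y <- ball nbrs x (2 * r)) f y ^+ 2 >=
        (2 * CH)^-1 * (size (ball nbrs x (2 * r)))%:R *
        (supl (ball nbrs x r) (fun y => f y ^+ 2) - c2 * r ^+ 4).
Proof.
exists (162 * c ^+ 2) => V nbrs sg _ _ mh et x r r1 f f0 hf.
set B2 := ball nbrs x (2 * r); set N : R := (size B2)%:R.
set S := \sum_(y <- B2) f y ^+ 2; set K := 162 * c ^+ 2 * r ^+ 4.
have CH1 : 1 <= CH := moser_harnack_ge1 x mh.
have xB2 : x \in B2 by apply: ballseq_center.
have N0 : 0 < N by rewrite ltr0n; case: (B2) xB2.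
have S0 : 0 <= S by apply: sumr_ge0 => y _; apply: sqr_ge0.
have CHN0 : 0 <= CH / N by rewrite divr_ge0 ?ltW //; lra.
have K0 : 0 <= K by rewrite mulr_ge0 ?exprn_ge0 ?(mulr_ge0 _ (sqr_ge0 c)) //; lra.
have sup_le : supl (ball nbrs x r) (fun y => f y ^+ 2) <= 2 * (CH / N * S) + K.
  apply: supl_le => [|y yx]; last exact: sqr_le_harnack_mean.
  by rewrite addr_ge0 // mulr_ge0 // mulr_ge0.
have coef0 : 0 <= (2 * CH)^-1 * N by rewrite mulr_ge0 ?invr_ge0 //; lra.
apply: le_trans (ler_wpM2l coef0 (_ : _ - K <= 2 * (CH / N * S))) _; first lra.
by rewrite [X in X <= _](_ : _ = S) //; field; rewrite gt_eqF //=; lra.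
Qed.
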